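(* Let $M\ge 1$ be an integer (the number of end-to-end spatial subchannels, $M=KN$), let $\mathcal{P}_{\rm S}>0$ and $\mathcal{P}_{\rm R}>0$ be the total transmit powers available at the source and at the relay, and let $g_{1,1},\dots,g_{1,M}>0$ and $g_{2,1},\dots,g_{2,M}>0$ be the noise-normalized channel gains of the subchannels over hop 1 and hop 2, respectively (i.e. $g_{1,n}=\lambda_{1,n}/\sigma_{\rm R}^2$, $g_{2,n'}=\lambda_{2,n'}/\sigma_{\rm D}^2$). Let $c>0$ be a constant. Consider the problem $$\max_{\theta,\mu,\overline{\mu}}\ \sum_{n=1}^{M}\sum_{n'=1}^{M}\theta_{n,n'}\, c\,\min\Big(\log_2\big(1+\mathcal{P}_{\rm S}\mu_n g_{1,n}\big),\ \log_2\big(1+\mathcal{P}_{\rm R}\overline{\mu}_{n'} g_{2,n'}\big)\Big)$$ subject to $\sum_{n=1}^M\mu_n\le 1$, $\sum_{n'=1}^M\overline{\mu}_{n'}\le 1$, $\mu_n\ge 0$, $\overline{\mu}_{n'}\ge0$, $\theta_{n,n'}\in\{0,1\}$, $\sum_{n=1}^M\theta_{n,n'}=1$ for every $n'$ and $\sum_{n'=1}^M\theta_{n,n'}=1$ for every $n$. Then the optimal subchannel pairing is the sorted pairing: there is an optimal solution in which, for each $i=1,\dots,M$, the hop-1 subchannel with the $i$-th largest gain $g_{1,n}$ is paired (i.e. $\theta_{n,n'}=1$) with the hop-2 subchannel with the $i$-th largest gain $g_{2,n'}$.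
   Context: Setting: a half-duplex two-hop decode-and-forward MIMO-OFDM relaying system (source S, energy-harvesting relay R, destination D) where, after SVD precoding/filtering, each hop is decomposed into $M=KN$ parallel independent subchannels ($K$ OFDM subcarriers, $N=\min\{N_{\rm S},N_{\rm R},N_{\rm D}\}$ spatial subchannels per subcarrier), with $\lambda_{i,n}$ the squared nonzero singular values of the hop-$i$ channel matrices and $\sigma_{\rm R}^2,\sigma_{\rm D}^2$ the noise powers at R and D. The variable $\theta_{n,n'}=1$ means hop-1 subchannel $n$ is paired with hop-2 subchannel $n'$; $\mu_n$ and $\overline{\mu}_{n'}$ are power allocation fractions at S and R. The rate of a pair is the minimum of the two hop rates, and $c=\frac{(1-\alpha)\mathfrak{B}}{2K}$ for a fixed time-switching factor $\alpha\in[0,1)$ and bandwidth $\mathfrak{B}$. *)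

From HB Require Import structures.
From mathcomp Require Import all_boot all_order all_algebra all_fingroup.
From mathcomp Require Import all_classical all_reals all_analysis.
Set Implicit Arguments. Unset Strict Implicit. Unset Printing Implicit Defensive.
Import Order.TTheory GRing.Theory Num.Theory.
Local Open Scope ring_scope.

Definition log2 (R : realType) (x : R) : R := ln x / ln 2.

Definition objective (R : realType) (M : nat) (PS PR c : R)
  (g1 g2 : 'I_M -> R) (theta : 'I_M -> 'I_M -> R) (mu mub : 'I_M -> R) : R :=
  \sum_(n < M) \sum_(n' < M)
     theta n n' * (c * Num.min (log2 (1 + PS * mu n * g1 n))
                               (log2 (1 + PR * mub n' * g2 n'))).

Definition feasible (R : realType) (M : nat)
  (theta : 'I_M -> 'I_M -> R) (mu mub : 'I_M -> R) : Prop :=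
  (\sum_(n < M) mu n <= 1) /\
  (\sum_(n' < M) mub n' <= 1) /\
  (forall n, 0 <= mu n) /\
  (forall n', 0 <= mub n') /\
  (forall n n', theta n n' = 0 \/ theta n n' = 1) /\
  (forall n', \sum_(n < M) theta n n' = 1) /\
  (forall n, \sum_(n' < M) theta n n' = 1).

(* s lists the indices in nonincreasing order of gain: s i is the index with
   the (i+1)-th largest gain (0-based i). *)
Definition sorts_desc (R : realType) (M : nat) (g : 'I_M -> R) (s : {perm 'I_M}) : Prop :=
  forall i j : 'I_M, (i <= j)%N -> g (s j) <= g (s i).

From HB Require Import structures.
From mathcomp Require Import all_boot all_order all_algebra all_fingroup.
From mathcomp Require Import all_classical all_reals all_analysis.
From mathcomp Require Import ring lra zify.
Set Implicit Arguments. Unset Strict Implicit. Unset Printing Implicit Defensive.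
Import Order.TTheory GRing.Theory Num.Theory numFieldNormedType.Exports.
Local Open Scope ring_scope.
Local Open Scope classical_set_scope.

(** Once a pairing p and the power fractions are fixed, pair n achieves
    c log2 (1 + x n), where x n is the smaller of its two SNRs; lowering both SNRs
    to x n only saves power.  So a solution is described by its vector x of pair
    SNRs, subject to the two linear power budgets
    sum_n x n / (PS g1 n) <= 1 and sum_n x n / (PR g2 (p n)) <= 1.
    By the rearrangement inequality, handing the values of x out in decreasing
    order to the subchannels ranked by decreasing gain, on both hops at once,
    lowers both budgets; hence every value of the objective is reached by the
    sorted pairing.  In these sorted coordinates the problem maximises a
    continuous function over a compact polytope, so it has an optimum. *)

Lemma perm_strict_mono_id n (s : {perm 'I_n}) :
  (forall i j : 'I_n, (i < j)%N -> (s i < s j)%N) -> s = 1%g.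
Proof.
move=> s_mono.
have le_s : forall i : 'I_n, (i <= s i)%N.
  move=> [m]; elim: m => [//|m IHm] lt_m1n.
  have lt_mn : (m < n)%N by lia.
  have := s_mono (Ordinal lt_mn) (Ordinal lt_m1n) (ltnSn m).
  have := IHm lt_mn; rewrite /=; lia.
have sum_s : (\sum_(i < n) (s i - i) = 0)%N.
  have : (\sum_(i < n) (s i - i) + \sum_(i < n) (i : nat) = \sum_(i < n) (s i : nat))%N.
    by rewrite -big_split /=; apply: eq_bigr => i _; exact: subnK.
  have -> : (\sum_(i < n) (s i : nat) = \sum_(i < n) (i : nat))%N.
    by rewrite [RHS](reindex_inj (@perm_inj _ s)).
  by move/eqP; rewrite -[X in (_ == X)%N]add0n eqn_add2r => /eqP.
apply/permP => i; apply/val_inj/eqP; rewrite perm1 eqn_leq le_s andbT.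
by move/eqP: sum_s; rewrite sum_nat_eq0 => /forallP /(_ i); rewrite subn_eq0.
Qed.

Lemma sumrB_except2 (R : zmodType) n (F G : 'I_n -> R) (i j : 'I_n) :
  i != j -> (forall k, k != i -> k != j -> F k = G k) ->
  \sum_k F k - \sum_k G k = F i + F j - (G i + G j).
Proof.
move=> ij FG; rewrite (bigD1 i) // (bigD1 j) 1?eq_sym //=.
rewrite [\sum_k G k](bigD1 i) // (bigD1 j) 1?eq_sym //=.
rewrite (eq_bigr G) => [|k /andP[]]; last exact: FG.
by rewrite !addrA [G i + G j + _]addrC addrKA.
Qed.

(* Among the permutations t doing no worse than s, one maximising sum_i i * t i is
   the identity: swapping an inversion of t does not increase the sum and
   strictly increases the potential. *)
Lemma rearrangement_inequality (R : realDomainType) n (y a : 'I_n -> R) :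
  (forall i j : 'I_n, (i <= j)%N -> y j <= y i) ->
  (forall i j : 'I_n, (i <= j)%N -> a i <= a j) ->
  forall s : {perm 'I_n}, \sum_i y i * a i <= \sum_i y (s i) * a i.
Proof.
move=> y_dec a_inc s.
pose below (t : {perm 'I_n}) := \sum_i y (t i) * a i <= \sum_i y (s i) * a i.
pose phi (t : {perm 'I_n}) := (\sum_(i < n) i * t i)%N.
have [t t_below t_max] := arg_maxnP phi (lexx _ : below s).
suff t1 : t = 1%g by move: t_below; rewrite /below t1; under eq_bigr do rewrite perm1.
apply: perm_strict_mono_id => i j lt_ij; rewrite ltnNge; apply/negP => le_tji.
have ne_ij : i != j by rewrite neq_ltn lt_ij.
have lt_tji : (t j < t i)%N.
  by rewrite ltn_neqAle le_tji andbT; apply: contra ne_ij => /eqP/val_inj/perm_inj ->.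
pose u := (tperm i j * t)%g.
have u_off k : k != i -> k != j -> t k = u k by move=> ki kj; rewrite permM tpermD // eq_sym.
have [ui uj] : u i = t j /\ u j = t i by rewrite !permM tpermL tpermR.
have u_below : below u.
  apply: le_trans t_below; rewrite -subr_ge0.
  rewrite (sumrB_except2 ne_ij) => [|k ki kj]; last by rewrite u_off.
  rewrite ui uj.
  have := y_dec _ _ (ltnW lt_tji); have := a_inc _ _ (ltnW lt_ij); nra.
have := t_max u u_below; apply/negP; rewrite -ltnNge -(ltr_nat R) !natr_sum.
rewrite -subr_gt0 (sumrB_except2 ne_ij) => [|k ki kj]; last by rewrite u_off.
rewrite ui uj !natrM.
have : (i%:R : R) < j%:R by rewrite ltr_nat.
have : ((t j)%:R : R) < (t i)%:R by rewrite ltr_nat.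
nra.
Qed.

Lemma exists_perm_nonincreasing (R : realDomainType) n (z : 'I_n -> R) :
  exists s : {perm 'I_n}, forall i j : 'I_n, (i <= j)%N -> z (s j) <= z (s i).
Proof.
pose ge : rel R := fun x y => y <= x.
have ge_trans : transitive ge by move=> x1 x2 x3 h21 h32; exact: le_trans h32 h21.
have ge_total : total ge by move=> x1 x2; exact: le_total.
have /tuple_permP[s sort_z] : perm_eq (sort ge (mktuple z)) (mktuple z).
  by rewrite perm_sort.
exists s => i j le_ij.
have := sorted_leq_nth ge_trans (@lexx _ R) 0 (sort_sorted ge_total (mktuple z)).
rewrite sort_z => /(_ i j); rewrite !inE size_tuple !ltn_ord => /(_ isT isT le_ij).
by rewrite /ge !nth_mktuple !tnth_mktuple.
Qed.

Definition admissible (R : numDomainType) n (a b y : 'I_n -> R) : Prop :=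
  [/\ forall i, 0 <= y i, \sum_i y i * a i <= 1 & \sum_i y i * b i <= 1].

Definition sum_rate (R : realType) n (c : R) (y : 'I_n -> R) : R :=
  \sum_i c * log2 (1 + y i).

Lemma continuous_sum (R : numFieldType) (T : topologicalType) (I : Type)
    (r : seq I) (F : I -> T -> R) :
  (forall i, continuous (F i)) -> continuous (fun x => \sum_(i <- r) F i x).
Proof.
move=> cF; elim: r => [|i r IHr].
  by under eq_fun do rewrite big_nil; exact: cst_continuous.
under eq_fun do rewrite big_cons.
by move=> x; exact: continuousD (cF i x) (IHr x).
Qed.

Lemma continuous_budget (R : realType) n (a : 'I_n -> R) :
  continuous (fun v : 'rV[R]_n => \sum_i v ord0 i * a i).
Proof.
apply: continuous_sum => i v.
exact: (continuousM (@coord_continuous _ _ _ ord0 i v) (@cst_continuous _ R (a i) v)).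
Qed.

Lemma closed_admissible (R : realType) n (a b : 'I_n -> R) :
  closed [set v : 'rV[R]_n | admissible a b (v ord0)].
Proof.
have -> : [set v : 'rV[R]_n | admissible a b (v ord0)] =
    \bigcap_(i in setT) ((fun v : 'rV[R]_n => v ord0 i) @^-1` [set x | 0 <= x]) `&`
    ((fun v => \sum_i v ord0 i * a i) @^-1` [set x | x <= 1]) `&`
    ((fun v => \sum_i v ord0 i * b i) @^-1` [set x | x <= 1]).
  apply/seteqP; split=> v /=.
    by move=> [v_ge0 ? ?]; do 2?split=> //; move=> i _; exact: v_ge0.
  by move=> [[v_ge0 ? ?]]; split=> // i; exact: v_ge0.
apply: closedI; first apply: closedI.
- apply: closed_bigI => i _; apply: preimage_closed (@closed_ge R 0).
  by move=> v _; exact: coord_continuous.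
- by apply: preimage_closed (@closed_le R 1) => v _; exact: continuous_budget.
- by apply: preimage_closed (@closed_le R 1) => v _; exact: continuous_budget.
Qed.

Lemma compact_admissible (R : realType) n (a b : 'I_n -> R) :
  (forall i, 0 < a i) -> compact [set v : 'rV[R]_n | admissible a b (v ord0)].
Proof.
move=> a_gt0; apply: (@subclosed_compact _ _
  [set v : 'rV[R]_n | forall i, `[0, (a i)^-1]%classic (v ord0 i)]).
- exact: closed_admissible.
- by apply: (@rV_compact _ _ (fun i => `[0, (a i)^-1]%classic)) => i; exact: segment_compact.
- move=> v [v_ge0 v_a _] i /=; rewrite in_itv /= v_ge0 -(ler_pM2r (a_gt0 i)) mulVf ?gt_eqF //.
  apply: le_trans v_a; rewrite (bigD1 i) //= lerDl sumr_ge0 // => j _.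
  by rewrite mulr_ge0 ?v_ge0 ?ltW.
Qed.

(* The norm makes the function continuous everywhere (ln needs a positive
   argument) while leaving it unchanged on admissible vectors. *)
Lemma continuous_sum_rate_norm (R : realType) n (c : R) :
  continuous (fun v : 'rV[R]_n => sum_rate c (fun i => `|v ord0 i|)).
Proof.
apply: continuous_sum => i v; rewrite /log2.
have arg_cont : continuous (fun w : 'rV[R]_n => 1 + `|w ord0 i|).
  move=> w; apply: (continuousD (@cst_continuous _ R 1 w)).
  exact: (continuous_comp (@coord_continuous _ _ _ ord0 i w) (@norm_continuous _ R^o _)).
apply: (continuousM (@cst_continuous _ R c v)).
apply: (continuousM _ (@cst_continuous _ R (ln 2)^-1 v)).
by apply: (continuous_comp (arg_cont v)); apply: continuous_ln; rewrite ltr_pwDl.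
Qed.

Lemma exists_max_sum_rate (R : realType) n (c : R) (a b : 'I_n -> R) :
  (forall i, 0 < a i) ->
  exists2 y, admissible a b y &
    forall y', admissible a b y' -> sum_rate c y' <= sum_rate c y.
Proof.
move=> a_gt0; set X := [set v : 'rV[R]_n | admissible a b (v ord0)].
have X0 : X !=set0.
  by exists 0; split=> [i||]; rewrite ?mxE // big1 ?ler01 // => i _; rewrite mxE mul0r.
have [v /set_mem v_adm v_max] := EVT_max_rV X0 (compact_admissible (b := b) a_gt0)
  (continuous_subspaceT (@continuous_sum_rate_norm _ n c)).
have norm_id (w : 'I_n -> R) : admissible a b w -> sum_rate c (fun i => `|w i|) = sum_rate c w.
  by move=> [w_ge0 _ _]; apply: eq_bigr => i _; rewrite ger0_norm.
exists (v ord0) => // y y_adm.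
have row_y : (\row_i y i) ord0 = y by apply/funext => i; rewrite mxE.
have := v_max (\row_i y i); rewrite inE /X /= row_y => /(_ y_adm).
by rewrite !norm_id.
Qed.

Lemma sorted_pairing_budgets (R : realDomainType) n (z a b : 'I_n -> R)
    (p : {perm 'I_n}) :
  (forall i j : 'I_n, (i <= j)%N -> a i <= a j) ->
  (forall i j : 'I_n, (i <= j)%N -> b i <= b j) ->
  exists s : {perm 'I_n},
    \sum_i z (s i) * a i <= \sum_i z i * a i /\
    \sum_i z (s i) * b i <= \sum_i z (p i) * b i.
Proof.
move=> a_inc b_inc; have [s zs_dec] := exists_perm_nonincreasing z.
exists s; split.
- have := rearrangement_inequality zs_dec a_inc s^-1.
  by under [X in _ <= X -> _]eq_bigr do rewrite permKV.
- have := rearrangement_inequality zs_dec b_inc (p * s^-1)%g.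
  by under [X in _ <= X -> _]eq_bigr do rewrite permM permKV.
Qed.

Definition pairing (R : pzRingType) M (p : {perm 'I_M}) (n n' : 'I_M) : R :=
  (n' == p n)%:R.

Lemma pairing_sum_row (R : pzRingType) M (p : {perm 'I_M}) n :
  \sum_n' pairing R p n n' = 1.
Proof. by rewrite (bigD1 (p n)) //= /pairing eqxx big1 ?addr0 // => n' /negbTE ->. Qed.

Lemma pairing_sum_col (R : pzRingType) M (p : {perm 'I_M}) n' :
  \sum_n pairing R p n n' = 1.
Proof.
rewrite (bigD1 (p^-1 n')%g) //= /pairing permKV eqxx big1 ?addr0 // => n ne.
by rewrite -(inj_eq (@perm_inj _ p^-1)) permK eq_sym (negbTE ne).
Qed.

Lemma ler_sum_pair (R : numDomainType) n (F : 'I_n -> R) (k l : 'I_n) :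
  k != l -> (forall j, 0 <= F j) -> F k + F l <= \sum_j F j.
Proof.
move=> kl F_ge0; rewrite (bigD1 k) //= (bigD1 l) 1?eq_sym //=.
by rewrite addrA lerDl sumr_ge0.
Qed.

Lemma exists_pairing (R : realDomainType) M (theta : 'I_M -> 'I_M -> R) :
  (forall n n', theta n n' = 0 \/ theta n n' = 1) ->
  (forall n', \sum_n theta n n' = 1) -> (forall n, \sum_n' theta n n' = 1) ->
  exists p : {perm 'I_M}, theta = pairing R p.
Proof.
move=> theta01 col row.
have theta_ge0 n n' : 0 <= theta n n' by case: (theta01 n n') => ->; rewrite ?ler01.
have two_ones (F : 'I_M -> R) k l : (forall j, 0 <= F j) -> \sum_j F j = 1 ->
    F k = 1 -> F l = 1 -> k = l.
  move=> F_ge0 F_sum Fk Fl; apply/eqP; apply: contraT => kl.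
  by have := ler_sum_pair kl F_ge0; rewrite F_sum Fk Fl; lra.
have one_in_row n : exists n', theta n n' = 1.
  apply: contrapT => no_one.
  have : \sum_n' theta n n' = 0.
    by apply: big1 => n' _; case: (theta01 n n') => // one; case: no_one; exists n'.
  by rewrite row => /eqP; rewrite oner_eq0.
have [pi piP] := choice one_in_row.
have pi_inj : injective pi.
  by move=> n m e; apply: (two_ones (theta^~ (pi n))) => //; rewrite ?col ?piP ?e.
exists (perm pi_inj); apply/funext => n; apply/funext => n'; rewrite /pairing permE.
case: eqP => [->|/eqP ne]; first exact: piP.
case: (theta01 n n') => // one; case/eqP: ne.
exact: (two_ones (theta n)).
Qed.

Lemma ler_log2_1D (R : realType) (u v : R) : 0 <= u -> 0 <= v ->
  (log2 (1 + u) <= log2 (1 + v)) = (u <= v).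
Proof.
move=> u_ge0 v_ge0; have ln2_gt0 : 0 < ln (2 : R) by apply: ln_gt0; lra.
by rewrite /log2 ler_pM2r ?invr_gt0 // ler_ln ?lerD2l // posrE; lra.
Qed.

Lemma min_log2_1D (R : realType) (u v : R) : 0 <= u -> 0 <= v ->
  Num.min (log2 (1 + u)) (log2 (1 + v)) = log2 (1 + Num.min u v).
Proof.
move=> u_ge0 v_ge0; case: (leP u v) => [le_uv|lt_vu].
  by rewrite !min_l // ler_log2_1D.
by rewrite !min_r // ler_log2_1D // ltW.
Qed.

Lemma objective_pairing (R : realType) M (PS PR c : R) (g1 g2 mu mub : 'I_M -> R)
    (p : {perm 'I_M}) :
  (forall n, 0 <= PS * mu n * g1 n) -> (forall n, 0 <= PR * mub n * g2 n) ->
  objective PS PR c g1 g2 (pairing R p) mu mub =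
  sum_rate c (fun n => Num.min (PS * mu n * g1 n) (PR * mub (p n) * g2 (p n))).
Proof.
move=> snr1_ge0 snr2_ge0; apply: eq_bigr => n _.
rewrite (bigD1 (p n)) //= big1 => [|n' /negbTE ne]; last by rewrite /pairing ne mul0r.
by rewrite /pairing eqxx mul1r addr0 min_log2_1D.
Qed.

(* Power fraction needed per unit of SNR on the k-th strongest subchannel. *)
Definition power_cost (R : realType) M (P : R) (g : 'I_M -> R) (s : {perm 'I_M})
    (k : 'I_M) : R :=
  (P * g (s k))^-1.

Section SortedCosts.
Variables (R : realType) (M : nat) (P : R) (g : 'I_M -> R) (s : {perm 'I_M}).
Hypotheses (P_gt0 : 0 < P) (g_gt0 : forall n, 0 < g n).

Lemma power_cost_gt0 k : 0 < power_cost P g s k.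
Proof. by rewrite invr_gt0 mulr_gt0. Qed.

Lemma power_cost_nondecreasing : sorts_desc g s ->
  forall k l : 'I_M, (k <= l)%N -> power_cost P g s k <= power_cost P g s l.
Proof. by move=> s_desc k l kl; rewrite lef_pV2 ?posrE ?mulr_gt0 // ler_pM2l // s_desc. Qed.

End SortedCosts.

Section RelayProblem.
Variables (R : realType) (M : nat) (PS PR c : R) (g1 g2 : 'I_M -> R).
Variables (s1 s2 : {perm 'I_M}).
Hypotheses (PS_gt0 : 0 < PS) (PR_gt0 : 0 < PR).
Hypotheses (g1_gt0 : forall n, 0 < g1 n) (g2_gt0 : forall n, 0 < g2 n).

Local Notation a := (power_cost PS g1 s1).
Local Notation b := (power_cost PR g2 s2).

Lemma feasible_sorted_admissible theta mu mub :
  sorts_desc g1 s1 -> sorts_desc g2 s2 -> feasible theta mu mub ->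
  exists2 y, admissible a b y & objective PS PR c g1 g2 theta mu mub = sum_rate c y.
Proof.
move=> s1_desc s2_desc [mu_sum [mub_sum [mu_ge0 [mub_ge0 [theta01 [col row]]]]]].
have [p ->] := exists_pairing theta01 col row.
pose x n := Num.min (PS * mu n * g1 n) (PR * mub (p n) * g2 (p n)).
have snr1_ge0 n : 0 <= PS * mu n * g1 n by rewrite !mulr_ge0 ?mu_ge0 ?ltW ?g1_gt0.
have snr2_ge0 n : 0 <= PR * mub n * g2 n by rewrite !mulr_ge0 ?mub_ge0 ?ltW ?g2_gt0.
rewrite (objective_pairing c p snr1_ge0 snr2_ge0).
have budget1 : \sum_n x n * (PS * g1 n)^-1 <= 1.
  apply: le_trans mu_sum; apply: ler_sum => n _.
  by rewrite ler_pdivrMr ?mulr_gt0 // mulrCA mulrA ge_min lexx.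
have budget2 : \sum_n x n * (PR * g2 (p n))^-1 <= 1.
  apply: le_trans mub_sum; rewrite [leRHS](reindex_inj (@perm_inj _ p)) ler_sum // => n _.
  by rewrite ler_pdivrMr ?mulr_gt0 // mulrCA mulrA ge_min lexx orbT.
(* z lists the pair SNRs by hop-1 rank; hop-2 rank k carries z (s1^-1 (p^-1 (s2 k))). *)
pose z k := x (s1 k).
have [s [budget1_s budget2_s]] := sorted_pairing_budgets z (s2 * p^-1 * s1^-1)%g
  (power_cost_nondecreasing PS_gt0 g1_gt0 s1_desc)
  (power_cost_nondecreasing PR_gt0 g2_gt0 s2_desc).
exists (fun k => z (s k)); last first.
  by rewrite /sum_rate [LHS](reindex_inj (@perm_inj _ (s * s1)%g)); under eq_bigr do rewrite permM.
split.
- by move=> k; rewrite le_min snr1_ge0 snr2_ge0.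
- apply: le_trans budget1_s _; apply: le_trans budget1.
  by rewrite [leRHS](reindex_inj (@perm_inj _ s1)).
- apply: le_trans budget2_s _; apply: le_trans budget2.
  rewrite [leRHS](reindex_inj (@perm_inj _ (s2 * p^-1)%g)) le_eqVlt; apply/orP; left.
  by apply/eqP/eq_bigr => k _; rewrite /z /power_cost !permM !permKV.
Qed.

Lemma sorted_solution y : admissible a b y ->
  exists theta mu mub, [/\ feasible theta mu mub,
    forall i, theta (s1 i) (s2 i) = 1 &
    objective PS PR c g1 g2 theta mu mub = sum_rate c y].
Proof.
move=> [y_ge0 y_a y_b].
pose mu n := y (s1^-1 n)%g * (PS * g1 n)^-1.
pose mub n' := y (s2^-1 n')%g * (PR * g2 n')^-1.
have snr1 n : PS * mu n * g1 n = y (s1^-1 n)%g.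
  by rewrite /mu; field; rewrite !gt_eqF ?g1_gt0.
have snr2 n' : PR * mub n' * g2 n' = y (s2^-1 n')%g.
  by rewrite /mub; field; rewrite !gt_eqF ?g2_gt0.
have snr1_ge0 n : 0 <= PS * mu n * g1 n by rewrite snr1.
have snr2_ge0 n' : 0 <= PR * mub n' * g2 n' by rewrite snr2.
exists (pairing R (s1^-1 * s2)%g), mu, mub; split.
- split; [|split; [|split; [|split; [|split]]]].
  + rewrite (reindex_inj (@perm_inj _ s1)).
    by under eq_bigr do rewrite /mu permK.
  + rewrite (reindex_inj (@perm_inj _ s2)).
    by under eq_bigr do rewrite /mub permK.
  + by move=> n; rewrite mulr_ge0 // invr_ge0 ltW // mulr_gt0.
  + by move=> n'; rewrite mulr_ge0 // invr_ge0 ltW // mulr_gt0.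
  + by move=> n n'; rewrite /pairing; case: eqP; [right|left].
  + split=> n; [exact: pairing_sum_col|exact: pairing_sum_row].
- by move=> i; rewrite /pairing permM permK eqxx.
rewrite (objective_pairing c _ snr1_ge0 snr2_ge0).
rewrite /sum_rate [LHS](reindex_inj (@perm_inj _ s1)).
by under eq_bigr do rewrite snr1 snr2 !permM !permK minxx.
Qed.

End RelayProblem.

Theorem theorem1 (R : realType) (M : nat) (hM : (1 <= M)%N)
  (PS PR c : R) (g1 g2 : 'I_M -> R)
  (hPS : 0 < PS) (hPR : 0 < PR) (hc : 0 < c)
  (hg1 : forall n, 0 < g1 n) (hg2 : forall n, 0 < g2 n)
  (s1 s2 : {perm 'I_M}) (hs1 : sorts_desc g1 s1) (hs2 : sorts_desc g2 s2) :
  exists (theta : 'I_M -> 'I_M -> R) (mu mub : 'I_M -> R),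
    [/\ feasible theta mu mub,
        (forall i : 'I_M, theta (s1 i) (s2 i) = 1)
      & (forall (theta' : 'I_M -> 'I_M -> R) (mu' mub' : 'I_M -> R),
           feasible theta' mu' mub' ->
           objective PS PR c g1 g2 theta' mu' mub'
             <= objective PS PR c g1 g2 theta mu mub)].
Proof.
have [y y_adm y_max] :=
  exists_max_sum_rate c (power_cost PR g2 s2) (power_cost_gt0 s1 hPS hg1).
have [theta [mu [mub [feas sorted obj]]]] := sorted_solution c hPS hPR hg1 hg2 y_adm.
exists theta, mu, mub; split=> // theta' mu' mub' feas'.
have [y' y'_adm ->] := feasible_sorted_admissible c hPS hPR hg1 hg2 hs1 hs2 feas'.
by rewrite obj; exact: y_max.
Qed.
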